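(* There exists a subset $\mathcal{A}\subseteq\mathbb{Z}$ which is not recursively enumerable but is determinable in finite quotients of $\mathbb{Z}$.
   Context: A subset $A$ of a finitely generated group $G$ is determinable in finite quotients of $G$ if there is an algorithm which, given a surjective homomorphism $\phi$ from $G$ onto a finite group $F$, decides membership in $\phi(A)\subseteq F$. For $G=\mathbb{Z}$ this amounts to an algorithm which, given $n\geq 1$, computes $\mathcal{A}\bmod n=\{r\in\{0,\dots,n-1\}:\exists a\in\mathcal{A},\ a\equiv r\bmod n\}$. *)

From Stdlib Require Import Arith ZArith List.
Import ListNotations.

Inductive prog : Type :=
| PZero : prog
| PSucc : prog
| PProj : nat -> prog
| PComp : prog -> list prog -> prog
| PPrimRec : prog -> prog -> prog
| PMu : prog -> prog.

Inductive eval : prog -> list nat -> nat -> Prop :=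
| eZero xs : eval PZero xs 0
| eSucc x xs : eval PSucc (x :: xs) (S x)
| eProj i xs : i < length xs -> eval (PProj i) xs (nth i xs 0)
| eComp f gs xs ys y : evals gs xs ys -> eval f ys y -> eval (PComp f gs) xs y
| ePrimRec0 f g xs y : eval f xs y -> eval (PPrimRec f g) (0 :: xs) y
| ePrimRecS f g n xs r y :
    eval (PPrimRec f g) (n :: xs) r -> eval g (n :: r :: xs) y ->
    eval (PPrimRec f g) (S n :: xs) y
| eMu f xs n :
    eval f (n :: xs) 0 ->
    (forall m, m < n -> exists k, eval f (m :: xs) (S k)) ->
    eval (PMu f) xs n
with evals : list prog -> list nat -> list nat -> Prop :=
| esNil xs : evals [] xs []
| esCons g gs xs y ys : eval g xs y -> evals gs xs ys -> evals (g :: gs) xs (y :: ys).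

(* Standard bijection Z -> nat: 0,-1,1,-2,2,... |-> 0,1,2,3,4,... *)
Definition Z_to_nat (z : Z) : nat :=
  if (0 <=? z)%Z then 2 * Z.to_nat z else 2 * Z.to_nat (- z) - 1.

Definition recursively_enumerable (A : Z -> Prop) : Prop :=
  exists p : prog, forall z : Z, A z <-> exists v, eval p [Z_to_nat z] v.

Definition mod_image (A : Z -> Prop) (n : nat) (r : nat) : Prop :=
  exists a : Z, A a /\ Z.modulo a (Z.of_nat n) = Z.of_nat r.

(* Determinable in finite quotients of Z: a total recursive function which,
   given n >= 1, outputs (a bit-vector encoding of) A mod n: bit r of the
   output (r < n) is set iff r is in A mod n. *)
Definition determinable_in_finite_quotients_Z (A : Z -> Prop) : Prop :=
  exists q : prog, forall n : nat, 1 <= n ->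
    exists v : nat, eval q [n] v /\
      forall r : nat, r < n -> (Nat.testbit v r = true <-> mod_image A n r).

(* Let A consist of all negative integers together with those z >= 0 that
   code a program not halting on z.  The negative part meets every residue
   class, so A mod n = {0, ..., n-1} for every n and a single program
   printing 2^n - 1 determines A in all finite quotients; yet A is not
   recursively enumerable, by Cantor's diagonal argument at the code of a
   would-be enumerating program. *)
From Stdlib Require Import Arith ZArith List Lia Cantor.
Import ListNotations.

Lemma pair_code_inj a b c d :
  Cantor.to_nat (a, b) = Cantor.to_nat (c, d) -> a = c /\ b = d.
Proof.
  intro H. apply (f_equal Cantor.of_nat) in H.
  rewrite !Cantor.cancel_of_to in H. now injection H.
Qed.

Fixpoint prog_code (p : prog) : nat :=
  match p with
  | PZero => Cantor.to_nat (0, 0)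
  | PSucc => Cantor.to_nat (1, 0)
  | PProj i => Cantor.to_nat (2, i)
  | PComp f gs =>
      Cantor.to_nat (3, Cantor.to_nat (prog_code f,
        (fix progs_code (l : list prog) : nat :=
           match l with
           | [] => 0
           | g :: l' => S (Cantor.to_nat (prog_code g, progs_code l'))
           end) gs))
  | PPrimRec f g => Cantor.to_nat (4, Cantor.to_nat (prog_code f, prog_code g))
  | PMu f => Cantor.to_nat (5, prog_code f)
  end.

Fixpoint progs_code (l : list prog) : nat :=
  match l with
  | [] => 0
  | g :: l' => S (Cantor.to_nat (prog_code g, progs_code l'))
  end.

Lemma prog_code_comp f gs :
  prog_code (PComp f gs) = Cantor.to_nat (3, Cantor.to_nat (prog_code f, progs_code gs)).
Proof. reflexivity. Qed.

(* A nested fixpoint: the automatic induction principle of [prog] gives no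
   hypothesis for the argument list of [PComp]. *)
Fixpoint prog_code_inj (p : prog) : forall q, prog_code p = prog_code q -> p = q.
Proof.
  destruct p as [| |i|f gs|f g|f]; intros [| |j|f' gs'|f' g'|f'] H;
    rewrite ?prog_code_comp in H; cbn [prog_code] in H;
    apply pair_code_inj in H; destruct H as [Htag H]; try discriminate Htag.
  - reflexivity.
  - reflexivity.
  - now subst.
  - apply pair_code_inj in H as [Hf Hgs].
    rewrite (prog_code_inj f f' Hf); f_equal.
    revert gs' Hgs; induction gs as [|g gs IH]; intros [|g' gs'] Hgs;
      cbn in Hgs; try discriminate; [reflexivity|].
    injection Hgs as Hgs; apply pair_code_inj in Hgs as [Hg Hgs].
    rewrite (prog_code_inj g g' Hg); f_equal; exact (IH gs' Hgs).
  - apply pair_code_inj in H as [Hf Hg].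
    now rewrite (prog_code_inj f f' Hf), (prog_code_inj g g' Hg).
  - now rewrite (prog_code_inj f f' H).
Qed.

Section Diagonal.

Context {X Y : Type} (R : X -> Y -> Prop) (code : X -> Y).
Hypothesis code_inj : forall x x', code x = code x' -> x = x'.

Definition diagonal (y : Y) : Prop := forall x, code x = y -> ~ R x y.

Lemma diagonal_code_neq x : ~ (diagonal (code x) <-> R x (code x)).
Proof.
  intros [Hdiag Hcode].
  assert (Hnot : ~ R x (code x)) by (intro HR; exact (Hcode HR x eq_refl HR)).
  apply Hnot, Hdiag. intros x' Hx'. rewrite (code_inj x' x Hx'). exact Hnot.
Qed.

End Diagonal.

Definition halts (p : prog) (z : Z) : Prop := exists v, eval p [Z_to_nat z] v.

Definition int_prog_code (p : prog) : Z := Z.of_nat (prog_code p).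

Definition negative_or_diagonal (z : Z) : Prop :=
  (z < 0)%Z \/ diagonal halts int_prog_code z.

Lemma int_prog_code_inj p q : int_prog_code p = int_prog_code q -> p = q.
Proof. unfold int_prog_code; intro H. apply prog_code_inj. lia. Qed.

Lemma negative_or_diagonal_not_re : ~ recursively_enumerable negative_or_diagonal.
Proof.
  intros [q Hq].
  apply (diagonal_code_neq halts int_prog_code int_prog_code_inj q).
  unfold halts. rewrite <- Hq. unfold negative_or_diagonal, int_prog_code.
  split; [intro Hdiag; now right | intros [Hneg|Hdiag]; [lia | exact Hdiag]].
Qed.

Lemma mod_image_full (A : Z -> Prop) (n r : nat) :
  (forall z, (z < 0)%Z -> A z) -> r < n -> mod_image A n r.
Proof.
  intros Hneg Hr. exists (Z.of_nat r - Z.of_nat n)%Z. split.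
  - apply Hneg. lia.
  - replace (Z.of_nat r - Z.of_nat n)%Z with (Z.of_nat r + (-1) * Z.of_nat n)%Z by lia.
    rewrite Z_mod_plus_full. apply Z.mod_small. lia.
Qed.

Lemma eval_proj_nth i xs y : nth i xs 0 = y -> i < length xs -> eval (PProj i) xs y.
Proof. intros <- Hi. now constructor. Qed.

Definition add_prog : prog := PPrimRec (PProj 0) (PComp PSucc [PProj 1]).

Lemma eval_add_prog a b : eval add_prog [a; b] (a + b).
Proof.
  induction a as [|a IH].
  - apply ePrimRec0. apply eval_proj_nth; [reflexivity | simpl; lia].
  - eapply ePrimRecS; [exact IH|].
    apply eComp with (ys := [a + b]); [|constructor].
    constructor; [|constructor]. apply eval_proj_nth; [reflexivity | simpl; lia].
Qed.

Definition ones_prog : prog :=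
  PPrimRec PZero (PComp PSucc [PComp add_prog [PProj 1; PProj 1]]).

Lemma ones_succ n : Nat.ones (S n) = S (Nat.ones n + Nat.ones n).
Proof.
  unfold Nat.ones. rewrite !Nat.shiftl_1_l, Nat.pow_succ_r'.
  pose proof (Nat.pow_nonzero 2 n). lia.
Qed.

Lemma eval_ones_prog n : eval ones_prog [n] (Nat.ones n).
Proof.
  induction n as [|n IH].
  - apply ePrimRec0. constructor.
  - rewrite ones_succ. eapply ePrimRecS; [exact IH|].
    apply eComp with (ys := [Nat.ones n + Nat.ones n]); [|constructor].
    constructor; [|constructor].
    eapply eComp; [|apply eval_add_prog].
    constructor; [|constructor; [|constructor]].
    all: apply eval_proj_nth; [reflexivity | simpl; lia].
Qed.

Lemma negative_or_diagonal_determinable :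
  determinable_in_finite_quotients_Z negative_or_diagonal.
Proof.
  exists ones_prog. intros n _. exists (Nat.ones n).
  split; [apply eval_ones_prog|].
  intros r Hr. split; intros _.
  - apply mod_image_full; [|exact Hr]. intros z Hz. now left.
  - now apply Nat.ones_spec_low.
Qed.

Theorem mainTheorem5 :
  exists A : Z -> Prop,
    ~ recursively_enumerable A /\ determinable_in_finite_quotients_Z A.
Proof.
  exists negative_or_diagonal.
  split; [exact negative_or_diagonal_not_re | exact negative_or_diagonal_determinable].
Qed.
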